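(* Let $1\le p<\infty$ and let $\mathbf u,\mathbf v$ be bounded sequences of non-zero scalars such that $\sum_{n=1}^\infty\frac{1}{|u_1\cdots u_n|^p}<\infty$ and $\sum_{n=1}^\infty\frac1{|v_1\cdots v_n|^p}<\infty$. Consider the weighted backward shifts $B_{\mathbf u},B_{\mathbf v}$ on $\ell_p(\mathbb Z_+)$. The following are equivalent: (1) $B_{\mathbf u}$ and $B_{\mathbf v}$ share a non-zero periodic point, i.e. there is $x\ne0$ and $d_1,d_2\in\mathbb N$ with $B_{\mathbf u}^{d_1}x=x=B_{\mathbf v}^{d_2}x$; (2) there exist $d\in\mathbb N$ and $0\le j\le d-1$ such that $u_{1+j}\cdots u_{dm+j}=v_{1+j}\cdots v_{dm+j}$ for all $m\ge1$; (3) there exist $d\in\mathbb N$, $0\le j\le d-1$ and a non-zero scalar $C$ such that $u_1\cdots u_{dm+j}=C\,v_1\cdots v_{dm+j}$ for all $m\ge0$ (an empty product being equal to $1$).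
   Context: $(e_n)_{n\ge0}$ is the canonical basis of $\ell_p(\mathbb Z_+)$ (real or complex), and $B_{\mathbf w}e_0=0$, $B_{\mathbf w}e_n=w_ne_{n-1}$ for $n\ge1$. *)

From HB Require Import structures.
From mathcomp Require Import all_boot all_order all_algebra.
From mathcomp Require Import all_classical all_reals all_analysis.
From mathcomp Require Import complex.
Set Implicit Arguments. Unset Strict Implicit. Unset Printing Implicit Defensive.
Import Order.TTheory GRing.Theory Num.Theory.
Import numFieldNormedType.Exports.
Local Open Scope ring_scope.

(* Scalars: K (to be instantiated with R or R[i]), with absolute value
   nrm : K -> R (a real-valued modulus).
   Weights w are indexed from 1: only w n for n >= 1 are used (w 0 is ignored). *)

Definition in_lp (R : realType) (K : Type) (nrm : K -> R) (p : R) (x : nat -> K) :=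
  cvgn (series (fun n => nrm (x n) `^ p)).

(* weighted backward shift: B_w e_0 = 0, B_w e_n = w_n e_{n-1},
   i.e. (B_w x)_k = w_{k+1} x_{k+1} *)
Definition bshift (K : nzRingType) (w : nat -> K) (x : nat -> K) : nat -> K :=
  fun k => w k.+1 * x k.+1.

Definition bdd_nonzero_weight (R : realType) (K : nzRingType) (nrm : K -> R)
  (w : nat -> K) :=
  (exists M : R, forall n, (1 <= n)%N -> nrm (w n) <= M) /\
  (forall n, (1 <= n)%N -> w n != 0).

Definition weight_summable (R : realType) (K : nzRingType) (nrm : K -> R) (p : R)
  (w : nat -> K) :=
  cvgn (series (fun n => (nrm (\prod_(1 <= i < n.+2) w i) `^ p)^-1)).

Definition common_periodic (R : realType) (K : nzRingType) (nrm : K -> R) (p : R)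
  (u v : nat -> K) :=
  exists x : nat -> K, in_lp nrm p x /\ x != (fun _ => 0) /\
    exists d1 d2 : nat, (1 <= d1)%N /\ (1 <= d2)%N /\
      iter d1 (bshift u) x = x /\ iter d2 (bshift v) x = x.

Definition cond2 (K : nzRingType) (u v : nat -> K) :=
  exists d j : nat, (1 <= d)%N /\ (j <= d - 1)%N /\
    forall m : nat, (1 <= m)%N ->
      \prod_(1 + j <= i < d * m + j + 1) u i = \prod_(1 + j <= i < d * m + j + 1) v i.

Definition cond3 (K : nzRingType) (u v : nat -> K) :=
  exists (d j : nat) (C : K), (1 <= d)%N /\ (j <= d - 1)%N /\ C != 0 /\
    forall m : nat,
      \prod_(1 <= i < d * m + j + 1) u i = C * \prod_(1 <= i < d * m + j + 1) v i.

Definition thm_for (R : realType) (K : nzRingType) (nrm : K -> R) :=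
  forall (p : R) (u v : nat -> K), 1 <= p ->
    bdd_nonzero_weight nrm u -> bdd_nonzero_weight nrm v ->
    weight_summable nrm p u -> weight_summable nrm p v ->
    (common_periodic nrm p u v <-> cond2 u v) /\ (cond2 u v <-> cond3 u v).

Definition cmod (R : realType) (z : R[i]) : R := ComplexField.Normc.normc z.

From HB Require Import structures.
From mathcomp Require Import all_boot all_order all_algebra.
From mathcomp Require Import all_classical all_reals all_analysis.
From mathcomp Require Import complex zify.
Import Order.TTheory GRing.Theory Num.Theory.
Import numFieldNormedType.Exports.
Local Open Scope ring_scope.
Set Implicit Arguments. Unset Strict Implicit.

(* Iterating [B_w] gives [(B_w^n x)_k = w_(k+1) ... w_(k+n) x_(k+n)].  Hence a
   common periodic point [x], with common period [d], satisfies
   [x_j = (u_(j+1) ... u_(j+dm)) x_(j+dm) = (v_(j+1) ... v_(j+dm)) x_(j+dm)];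
   choosing [j < d] with [x_j <> 0] forces [x_(j+dm) <> 0], and cancelling it
   gives (2).  Conversely, under (2) the vector supported on [j + dZ_+] with
   [x_k = 1 / (u_(j+1) ... u_k)] is fixed by [B_u^d] and [B_v^d], and it lies in
   [l_p] because [|x_k|^p = |u_1 ... u_j|^p / |u_1 ... u_k|^p].  Finally (2) and
   (3) differ only by the factor [C = (u_1 ... u_j) / (v_1 ... v_j)]. *)

Lemma is_cvg_series_shiftS (R : realType) (f : R ^nat) :
  cvgn (series (fun n => f n.+1)) -> cvgn (series f).
Proof.
move=> Sf; apply: (cvgP (f 0%N + limn (series (fun n => f n.+1)))).
rewrite -cvg_shiftS /=.
have -> : (fun n => series f n.+1) = (fun n => f 0%N + series (fun n => f n.+1) n).
  by apply: funext => n; rewrite !seriesEnat /= big_nat_recl.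
exact: cvgD (cvg_cst _) Sf.
Qed.

Lemma powR_inv (R : realType) (a p : R) : 0 < a -> a^-1 `^ p = (a `^ p)^-1.
Proof.
move=> a_gt0; have apN0 : a `^ p != 0 by rewrite gt_eqF // powR_gt0.
apply: (mulIf apN0); rewrite -powRM ?invr_ge0 ?ltW //.
by rewrite mulVf ?gt_eqF // powR1 mulVf.
Qed.

Lemma iter_periodM (T : Type) (f : T -> T) x d m :
  iter d f x = x -> iter (d * m) f x = x.
Proof. by move=> x_per; rewrite mulnC iterM; elim: m => //= m ->. Qed.

Lemma prod_split_at (K : nzRingType) (w : nat -> K) j n : (j <= n)%N ->
  \prod_(1 <= i < n.+1) w i = \prod_(1 <= i < j.+1) w i * \prod_(j.+1 <= i < n.+1) w i.
Proof. by move=> jn; rewrite (big_cat_nat _ (n := j.+1)). Qed.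

Section WeightedShift.
Variables (K : nzRingType) (w : nat -> K).

Lemma iter_bshift n x k :
  iter n (bshift w) x k = (\prod_(k.+1 <= i < (k + n).+1) w i) * x (k + n)%N.
Proof.
elim: n k => [|n IH] k; first by rewrite addn0 big_geq // mul1r.
rewrite /= {1}/bshift IH [in RHS]big_ltn; last by lia.
by rewrite mulrA addSn addnS.
Qed.

Lemma bshift_periodicE d x : iter d (bshift w) x = x ->
  forall m k, x k = (\prod_(k.+1 <= i < (k + d * m).+1) w i) * x (k + d * m)%N.
Proof. by move=> x_per m k; rewrite -iter_bshift iter_periodM. Qed.

End WeightedShift.

Section NonzeroWeights.
Variables (K : idomainType) (w : nat -> K).
Hypothesis w_neq0 : forall n, (0 < n)%N -> w n != 0.

Lemma prod_weights_neq0 a b : (0 < a)%N -> \prod_(a <= i < b) w i != 0.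
Proof.
move=> a_gt0; rewrite prodf_seq_neq0; apply/allP => i.
by rewrite mem_index_iota => /andP[ai _]; apply: w_neq0; lia.
Qed.

Lemma periodic_coord_modn_neq0 d x n : (0 < d)%N ->
  iter d (bshift w) x = x -> x n != 0 -> x (n %% d)%N != 0.
Proof.
move=> d_gt0 x_per.
have n_split : (n %% d + d * (n %/ d))%N = n by rewrite mulnC addnC -divn_eq.
rewrite -{1}n_split => xN0.
by rewrite (bshift_periodicE x_per (n %/ d) (n %% d)) mulf_neq0 // prod_weights_neq0.
Qed.

End NonzeroWeights.

Lemma common_periodic_prod_eq (K : idomainType) (u v : nat -> K) d x j :
  iter d (bshift u) x = x -> iter d (bshift v) x = x -> x j != 0 ->
  forall m, \prod_(j.+1 <= i < (j + d * m).+1) u i =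
            \prod_(j.+1 <= i < (j + d * m).+1) v i.
Proof.
move=> xu_per xv_per xjN0 m.
have xu := bshift_periodicE xu_per m j; have xv := bshift_periodicE xv_per m j.
have xjmN0 : x (j + d * m)%N != 0.
  by apply: contraNneq xjN0 => xjm0; rewrite xu xjm0 mulr0.
by apply: (mulIf xjmN0); rewrite -xu -xv.
Qed.

Definition periodic_vector (K : fieldType) (u : nat -> K) (d j : nat) : nat -> K :=
  fun k => if (k %% d == j)%N then (\prod_(j.+1 <= i < k.+1) u i)^-1 else 0.

Lemma periodic_vector_neq0 (K : fieldType) (u : nat -> K) d j :
  (j < d)%N -> periodic_vector u d j != (fun _ => 0).
Proof.
move=> jd; apply/eqP => /(congr1 (fun x => x j)) /eqP.
by rewrite /periodic_vector /= modn_small // eqxx big_geq // invr1 oner_eq0.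
Qed.

Lemma iter_bshift_periodic_vector (K : fieldType) (u w : nat -> K) d j :
  (forall n, (0 < n)%N -> w n != 0) ->
  (forall k, (k %% d)%N = j ->
     \prod_(j.+1 <= i < k.+1) w i = \prod_(j.+1 <= i < k.+1) u i) ->
  iter d (bshift w) (periodic_vector u d j) = periodic_vector u d j.
Proof.
move=> w_neq0 wu_prod; apply: funext => k.
rewrite iter_bshift /periodic_vector modnDr.
case: eqP => [kj|_]; last by rewrite mulr0.
have jk : (j <= k)%N by rewrite -kj leq_mod.
rewrite -(wu_prod (k + d)%N) ?modnDr // -(wu_prod k) //.
rewrite [X in _ / X](big_cat_nat _ (n := k.+1)) //=; last by lia.
by rewrite invfM mulrCA mulfV ?mulr1 // prod_weights_neq0.
Qed.

Lemma cond2E (K : nzRingType) (u v : nat -> K) :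
  cond2 u v <-> exists d j, [/\ (0 < d)%N, (j < d)%N & forall m,
    \prod_(j.+1 <= i < (j + d * m).+1) u i = \prod_(j.+1 <= i < (j + d * m).+1) v i].
Proof.
have idx d j m : (d * m + j + 1 = (j + d * m).+1)%N by lia.
split => [[d [j [d_gt0 [jd eq_uv]]]] | [d [j [d_gt0 jd eq_uv]]]]; exists d, j.
- split => //; first lia.
  by case=> [|m]; [rewrite muln0 addn0 !big_geq | rewrite -idx -add1n eq_uv].
- by do 2 split => //; [lia | move=> m _; rewrite add1n idx].
Qed.

Lemma common_periodic_cond2 (R : realType) (K : idomainType) (nrm : K -> R) p
    (u v : nat -> K) :
  (forall n, (0 < n)%N -> u n != 0) -> common_periodic nrm p u v -> cond2 u v.
Proof.
move=> u_neq0 [x [_ [xN0 [d1 [d2 [d1_gt0 [d2_gt0 [xu_per xv_per]]]]]]]].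
have [n xnN0] : exists n, x n != 0.
  apply/not_existsP => x0; apply/(negP xN0)/eqP/funext => n.
  by apply/eqP/negbNE/negP; exact: x0.
have d_gt0 : (0 < d1 * d2)%N by rewrite muln_gt0 d1_gt0.
have xu_d : iter (d1 * d2) (bshift u) x = x by exact: iter_periodM.
have xv_d : iter (d1 * d2) (bshift v) x = x by rewrite mulnC; exact: iter_periodM.
apply/cond2E; exists (d1 * d2)%N, (n %% (d1 * d2))%N; split; rewrite ?ltn_mod //.
exact: common_periodic_prod_eq (periodic_coord_modn_neq0 u_neq0 d_gt0 xu_d xnN0).
Qed.

Lemma cond2_cond3 (K : fieldType) (u v : nat -> K) :
  (forall n, (0 < n)%N -> u n != 0) -> (forall n, (0 < n)%N -> v n != 0) ->
  cond2 u v -> cond3 u v.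
Proof.
move=> u_neq0 v_neq0 /cond2E[d [j [d_gt0 jd eq_uv]]].
exists d, j, (\prod_(1 <= i < j.+1) u i / \prod_(1 <= i < j.+1) v i).
do 2 split => //; first lia.
split; first by rewrite mulf_neq0 ?invr_neq0 ?prod_weights_neq0.
move=> m; rewrite (_ : (d * m + j + 1 = (j + d * m).+1)%N); last lia.
rewrite (prod_split_at u (leq_addr _ j)) (prod_split_at v (leq_addr _ j)) eq_uv.
by rewrite mulrA divfK ?prod_weights_neq0.
Qed.

Lemma cond3_cond2 (K : fieldType) (u v : nat -> K) :
  (forall n, (0 < n)%N -> v n != 0) -> cond3 u v -> cond2 u v.
Proof.
move=> v_neq0 [d [j [C [d_gt0 [jd [CN0 eq_uCv]]]]]].
apply/cond2E; exists d, j; split => //; first lia.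
move=> m; have := eq_uCv m; have := eq_uCv 0%N.
rewrite muln0 add0n addn1 (_ : (d * m + j + 1 = (j + d * m).+1)%N); last lia.
rewrite (prod_split_at u (leq_addr _ j)) (prod_split_at v (leq_addr _ j)) => ->.
have CvN0 : C * \prod_(1 <= i < j.+1) v i != 0.
  by rewrite mulf_neq0 ?prod_weights_neq0.
by rewrite [RHS]mulrA => /(mulfI CvN0).
Qed.

Section AbsoluteValue.
Variables (R : realType) (K : fieldType) (nrm : K -> R).
Hypotheses (nrm_ge0 : forall x, 0 <= nrm x)
  (nrm_eq0 : forall x, (nrm x == 0) = (x == 0))
  (nrmM : forall x y, nrm (x * y) = nrm x * nrm y).

Lemma nrm0 : nrm 0 = 0.
Proof. by apply/eqP; rewrite nrm_eq0. Qed.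

Lemma nrmV x : nrm x^-1 = (nrm x)^-1.
Proof.
have [->|xN0] := eqVneq x 0; first by rewrite invr0 nrm0 invr0.
have nrm1N0 : nrm 1 != 0 by rewrite nrm_eq0 oner_eq0.
have nrm1 : nrm 1 = 1 by apply: (mulfI nrm1N0); rewrite -nrmM !mulr1.
have nrm_xN0 : nrm x != 0 by rewrite nrm_eq0.
by apply: (mulIf nrm_xN0); rewrite -nrmM !mulVf // nrm1.
Qed.

Lemma in_lp_periodic_vector (p : R) (u : nat -> K) d j :
  (forall n, (0 < n)%N -> u n != 0) -> p != 0 ->
  weight_summable nrm p u -> in_lp nrm p (periodic_vector u d j).
Proof.
move=> u_neq0 pN0 u_sum.
have nrm_prod_gt0 a b : (0 < a)%N -> 0 < nrm (\prod_(a <= i < b) u i).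
  by move=> a_gt0; rewrite lt_def nrm_eq0 prod_weights_neq0 ?nrm_ge0.
pose b k := (nrm (\prod_(1 <= i < k.+1) u i) `^ p)^-1.
have b_sum : cvgn (series b) by exact: is_cvg_series_shiftS.
pose c := nrm (\prod_(1 <= i < j.+1) u i) `^ p.
apply: (series_le_cvg (v_ := c *: b)); last exact: is_cvg_seriesZ.
- by move=> k; exact: powR_ge0.
- by move=> k; rewrite /= mulr_ge0 ?invr_ge0 ?powR_ge0.
move=> k; change ((c *: b) k) with (c * b k).
rewrite /periodic_vector; case: eqP => [kj|_]; last first.
  by rewrite nrm0 powR0 // mulr_ge0 ?invr_ge0 ?powR_ge0.
have jk : (j <= k)%N by rewrite -kj leq_mod.
rewrite nrmV powR_inv ?nrm_prod_gt0 // /b /c (prod_split_at u jk).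
rewrite nrmM powRM ?nrm_ge0 // invfM mulrA mulfV ?mul1r //.
by rewrite gt_eqF ?powR_gt0 ?nrm_prod_gt0.
Qed.

Lemma cond2_common_periodic (p : R) (u v : nat -> K) :
  (forall n, (0 < n)%N -> u n != 0) -> (forall n, (0 < n)%N -> v n != 0) ->
  p != 0 -> weight_summable nrm p u -> cond2 u v -> common_periodic nrm p u v.
Proof.
move=> u_neq0 v_neq0 pN0 u_sum /cond2E[d [j [d_gt0 jd eq_uv]]].
exists (periodic_vector u d j); split; first exact: in_lp_periodic_vector.
split; first exact: periodic_vector_neq0.
exists d, d; do 2 split => //; split; apply: iter_bshift_periodic_vector => // k kj.
have -> : k = (j + d * (k %/ d))%N by rewrite {1}(divn_eq k d) kj addnC mulnC.
by rewrite eq_uv.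
Qed.

Theorem thm_for_absolute_value : thm_for nrm.
Proof.
move=> p u v p_ge1 [_ u_neq0] [_ v_neq0] u_sum _.
have pN0 : p != 0 by rewrite gt_eqF // (lt_le_trans ltr01 p_ge1).
split; split.
- exact: common_periodic_cond2.
- exact: cond2_common_periodic.
- exact: cond2_cond3.
- exact: cond3_cond2.
Qed.

End AbsoluteValue.

Theorem theorem4p2 (R : realType) :
  thm_for (K := R) (fun x : R => `|x|) /\ thm_for (@cmod R).
Proof.
split; apply: thm_for_absolute_value.
- exact: normr_ge0.
- exact: normr_eq0.
- exact: normrM.
- by case=> a b; exact: sqrtr_ge0.
- move=> z; apply/eqP/eqP => [/ComplexField.Normc.eq0_normc // | ->].
  exact: ComplexField.Normc.normc0.
- exact: ComplexField.Normc.normcM.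
Qed.
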